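(* Let $A$ be a complex square matrix, $y$ a complex vector, and $k\ge 1$ an integer. Suppose there is a polynomial $P(X)=c_1X+c_2X^2+\cdots+c_kX^k$ of degree at most $k$ with $P(0)=0$ such that the Hermitian part $H=\tfrac12\big(P(A)^*+P(A)\big)$ of $P(A)$ is positive definite or negative definite. Let $$\rho=\sqrt{1-\left[\frac{\min|\lambda(H)|}{\|P(A)\|_2}\right]^2}.$$ Then $\rho<1$, and for every vector $x_n$ the affine space $$x_n+\operatorname{span}\{r_n,\;Ar_n,\;A^2r_n,\;\ldots,\;A^{k-1}r_n\}$$ contains a vector $x_{n+1}$ with $\|r_{n+1}\|_2\le \rho\,\|r_n\|_2$. The same affine space also contains a vector $x_{n+1}$ (in general a different one) with $\|e_{n+1}\|_2\le\rho\,\|e_n\|_2$.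
   Context: For a vector $x_j$, its residual is $r_j=y-Ax_j$ and its error is $e_j=x_*-x_j$, where $x_*$ is the exact solution of $Ax=y$ (under the hypothesis, $P(A)=A(c_1I+c_2A+\cdots+c_kA^{k-1})$ is nonsingular, so $A$ is nonsingular). $\lambda(H)$ denotes the set of eigenvalues of $H$, so $\min|\lambda(H)|$ is the smallest absolute value of an eigenvalue of $H$. $\|\cdot\|_2$ is the Euclidean vector norm and the induced matrix norm; $M^*$ is the conjugate transpose. *)

From HB Require Import structures.
From mathcomp Require Import all_boot all_order all_algebra.
From mathcomp Require Import complex.
From mathcomp Require Import boolp classical_sets reals.
Set Implicit Arguments. Unset Strict Implicit. Unset Printing Implicit Defensive.
Import Order.TTheory GRing.Theory Num.Theory.
Local Open Scope ring_scope.
Local Open Scope classical_set_scope.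

Section Defs.
Variable R : realType.
Variable n : nat.

Definition ctrmx (p q : nat) (M : 'M[R[i]]_(p, q)) : 'M[R[i]]_(q, p) :=
  (map_mx (@conjc R) M)^T.

Definition vnorm2 (v : 'cV[R[i]]_n) : R :=
  Num.sqrt (\sum_(j < n) (ComplexField.Normc.normc (v j 0)) ^+ 2).

Definition opnorm2 (M : 'M[R[i]]_n) : R :=
  sup [set vnorm2 (M *m v) | v in [set v : 'cV[R[i]]_n | vnorm2 v = 1]].

Definition herm_part (M : 'M[R[i]]_n) : 'M[R[i]]_n :=
  (2%:R)^-1 *: (ctrmx M + M).

(* positive / negative definiteness (order on R[i]: real and positive/negative) *)
Definition posdef (M : 'M[R[i]]_n) : Prop :=
  forall v : 'cV[R[i]]_n, v != 0 -> 0 < (ctrmx v *m M *m v) 0 0.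
Definition negdef (M : 'M[R[i]]_n) : Prop :=
  forall v : 'cV[R[i]]_n, v != 0 -> (ctrmx v *m M *m v) 0 0 < 0.

Definition min_abs_eig (M : 'M[R[i]]_n) : R :=
  inf [set ComplexField.Normc.normc a | a in [set a : R[i] | eigenvalue M a]].

End Defs.

From HB Require Import structures.
From mathcomp Require Import all_boot all_order all_algebra.
From mathcomp Require Import complex spectral.
From mathcomp Require Import classical_sets reals.
From mathcomp Require Import ring lra.
Import Order.TTheory GRing.Theory Num.Theory.
Set Implicit Arguments. Unset Strict Implicit. Unset Printing Implicit Defensive.
Local Open Scope ring_scope.
Local Open Scope complex_scope.

(* Let P = P(A), H its Hermitian part, s = 1 or -1 the sign for which s H is
   positive definite, m = min |lambda(H)| and N = ||P||_2.  Diagonalizing H by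
   a unitary matrix gives s (v^* H v) >= m |v|^2, and v^* H v is the real part
   of v^* P v.  Hence for the real step a = s m / N^2,
     |v - a P v|^2 <= (1 - 2 a s m + a^2 N^2) |v|^2 = (1 - (m/N)^2) |v|^2.
   The update x_(n+1) = x_n + a \sum_j c_(j+1) A^j r_n lies in the Krylov space
   and gives r_(n+1) = r_n - a P r_n and, as r_n = A e_n, e_(n+1) = e_n - a P e_n. *)

Section ComplexMatrices.
Variable R : realType.
Local Notation C := (R[i]).
Local Notation normc := (@ComplexField.Normc.normc R).

Definition qform n (M : 'M[C]_n) (v : 'cV[C]_n) : C := (ctrmx v *m M *m v) 0 0.

Definition sqnorm n (v : 'cV[C]_n) : R := \sum_(j < n) normc (v j 0) ^+ 2.

Lemma ctrmxE m n (A : 'M[C]_(m, n)) : ctrmx A = (A ^t*)%sesqui.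
Proof. by apply/matrixP => i j; rewrite !mxE. Qed.

Lemma ctrmx_mul m n p (A : 'M[C]_(m, n)) (B : 'M[C]_(n, p)) :
  ctrmx (A *m B) = ctrmx B *m ctrmx A.
Proof. by rewrite /ctrmx map_mxM trmx_mul. Qed.

Lemma ctrmxK m n (A : 'M[C]_(m, n)) : ctrmx (ctrmx A) = A.
Proof. by apply/matrixP => i j; rewrite !mxE conjcK. Qed.

Lemma ctrmxD m n (A B : 'M[C]_(m, n)) : ctrmx (A + B) = ctrmx A + ctrmx B.
Proof. by apply/matrixP => i j; rewrite !mxE rmorphD. Qed.

Lemma ctrmxZ m n a (A : 'M[C]_(m, n)) : ctrmx (a *: A) = conjc a *: ctrmx A.
Proof. by apply/matrixP => i j; rewrite !mxE rmorphM. Qed.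

Lemma ctrmx0 m n : ctrmx (0 : 'M[C]_(m, n)) = 0.
Proof. by apply/matrixP => i j; rewrite !mxE conjc0. Qed.

Lemma normc_ge0 (z : C) : 0 <= normc z.
Proof. by case: z => a b /=; rewrite sqrtr_ge0. Qed.

Lemma normc_real (x : R) : normc x%:C = `|x|.
Proof. by rewrite /= expr0n /= addr0 sqrtr_sqr. Qed.

Lemma normc_sum (I : finType) (f : I -> C) :
  normc (\sum_i f i) <= \sum_i normc (f i).
Proof.
apply: (big_ind2 (fun x y => normc x <= y)) => [|x1 x2 y1 y2 h1 h2|//].
  by rewrite Normc.normc0.
exact: le_trans (le_normcD _ _) (lerD h1 h2).
Qed.

Lemma normc_sqr (z : C) : (normc z ^+ 2)%:C = z^* * z.
Proof.
rewrite rmorphXn /=.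
have -> : (normc z)%:C = `|z| by [].
by rewrite sqr_normc mulrC.
Qed.

Lemma sqnormE n (v : 'cV[C]_n) : (sqnorm v)%:C = (ctrmx v *m v) 0 0.
Proof.
by rewrite mxE rmorph_sum; apply: eq_bigr => j _; rewrite !mxE; apply: normc_sqr.
Qed.

Lemma sqnorm_ge0 n (v : 'cV[C]_n) : 0 <= sqnorm v.
Proof. by apply: sumr_ge0 => j _; rewrite sqr_ge0. Qed.

Lemma sqnorm_eq0 n (v : 'cV[C]_n) : sqnorm v = 0 -> v = 0.
Proof.
move=> h; apply/matrixP => j k; rewrite ord1 mxE.
have := psumr_eq0P (fun j _ => sqr_ge0 (normc (v j 0))) h (isT : true) (i := j).
by move/eqP; rewrite sqrf_eq0 => /eqP /Normc.eq0_normc.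
Qed.

Lemma sqnormZ_real n (x : R) (v : 'cV[C]_n) : sqnorm (x%:C *: v) = x ^+ 2 * sqnorm v.
Proof.
rewrite /sqnorm mulr_sumr; apply: eq_bigr => j _.
by rewrite mxE Normc.normcM normc_real exprMn real_normK // num_real.
Qed.

Lemma sqnormD_real_scale n (v w : 'cV[C]_n) (c : R) :
  (sqnorm (v + c%:C *: w))%:C =
  (sqnorm v)%:C + c%:C * ((ctrmx w *m v) 0 0 + (ctrmx v *m w) 0 0)
    + c%:C ^+ 2 * (sqnorm w)%:C.
Proof.
rewrite !sqnormE !mxE -!big_split /= !mulr_sumr -!big_split /=.
have conjcD : {morph @conjc R : x y / x + y} by exact: rmorphD.
have conjcM : {morph @conjc R : x y / x * y} by exact: rmorphM.
apply: eq_bigr => j _; rewrite !mxE conjcD conjcM conjc_real.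
ring.
Qed.

Lemma sqnorm_unitary n (P : 'M[C]_n) (v : 'cV[C]_n) :
  ctrmx P *m P = 1%:M -> sqnorm (P *m v) = sqnorm v.
Proof.
move=> PtP; apply: complexI.
by rewrite !sqnormE ctrmx_mul -mulmxA [ctrmx P *m _]mulmxA PtP mul1mx.
Qed.

Lemma vnorm2_ge0 n (v : 'cV[C]_n) : 0 <= vnorm2 v.
Proof. exact: sqrtr_ge0. Qed.

Lemma vnorm2_sqr n (v : 'cV[C]_n) : vnorm2 v ^+ 2 = sqnorm v.
Proof. by rewrite sqr_sqrtr // sqnorm_ge0. Qed.

Lemma vnorm2_eq0 n (v : 'cV[C]_n) : vnorm2 v = 0 -> v = 0.
Proof. by move=> h; apply: sqnorm_eq0; rewrite -vnorm2_sqr h expr0n. Qed.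

Lemma vnorm2Z_real n (x : R) (v : 'cV[C]_n) : vnorm2 (x%:C *: v) = `|x| * vnorm2 v.
Proof. by rewrite /vnorm2 -/(sqnorm _) sqnormZ_real sqrtrM ?sqr_ge0 // sqrtr_sqr. Qed.

Lemma vnorm2_le_sqrt n (u v : 'cV[C]_n) (t : R) :
  sqnorm u <= t * sqnorm v -> vnorm2 u <= Num.sqrt t * vnorm2 v.
Proof.
move=> h; rewrite /vnorm2 -!/(sqnorm _).
have [t0|t0] := lerP 0 t; first by rewrite -sqrtrM // ler_sqrt // mulr_ge0 ?sqnorm_ge0.
have u0 : sqnorm u <= 0 by apply: le_trans h _; rewrite mulr_le0_ge0 ?sqnorm_ge0 // ltW.
by rewrite (ler0_sqrtr u0) (ler0_sqrtr (ltW t0)) mul0r.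
Qed.

Lemma opnorm2_bound n (M : 'M[C]_n.+1) (v : 'cV[C]_n.+1) :
  vnorm2 (M *m v) <= opnorm2 M * vnorm2 v.
Proof.
set E := ([set vnorm2 (M *m u) | u in [set u : 'cV[C]_n.+1 | vnorm2 u = 1]])%classic.
have supE : has_sup E.
  split.
    exists (vnorm2 (M *m delta_mx 0 0)), (delta_mx 0 0) => //=.
    rewrite /vnorm2 big_ord_recl big1 => [|j _].
      by rewrite !mxE /= !(expr1n, expr0n, addr0, sqrtr1).
    by rewrite !mxE /= !(expr0n, addr0, sqrtr0).
  (* coordinates of unit vectors have modulus at most 1 *)
  exists (Num.sqrt (\sum_i (\sum_j normc (M i j)) ^+ 2)).
  move=> _ [u /= u1 <-]; rewrite ler_sqrt; last first.
    by apply: sumr_ge0 => i _; apply: sqr_ge0.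
  apply: ler_sum => i _.
  have uj1 j : normc (u j 0) <= 1.
    rewrite -(ler_pXn2r (isT : (0 < 2)%N)) ?nnegrE ?normc_ge0 //.
    rewrite -u1 vnorm2_sqr /sqnorm (bigD1 j) //= lerDl.
    by apply: sumr_ge0 => k _; apply: sqr_ge0.
  have Mui : normc ((M *m u) i 0) <= \sum_j normc (M i j).
    rewrite mxE; apply: le_trans (normc_sum _) _; apply: ler_sum => j _.
    rewrite Normc.normcM -[X in _ <= X]mulr1 ler_wpM2l //; exact: normc_ge0.
  by rewrite !expr2 ler_pM //; exact: normc_ge0.
have [v0|vn0] := eqVneq (vnorm2 v) 0.
  by move: (v0); rewrite (vnorm2_eq0 v0) mulmx0 => ->; rewrite mulr0.
have vgt0 : 0 < vnorm2 v by rewrite lt_def vn0 vnorm2_ge0.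
have u1 : vnorm2 ((vnorm2 v)^-1%:C *: v) = 1.
  by rewrite vnorm2Z_real gtr0_norm ?invr_gt0 // mulVf.
have := sup_upper_bound supE (ex_intro2 _ _ _ u1 erefl).
rewrite -scalemxAr vnorm2Z_real gtr0_norm ?invr_gt0 // => h.
by rewrite mulrC -ler_pdivrMl // mulrC.
Qed.

Lemma opnorm2_gt0 n (M : 'M[C]_n.+1) : M != 0 -> 0 < opnorm2 M.
Proof.
apply: contraNT; rewrite -leNgt => Mle0; apply/eqP/matrixP => i j.
have Mcol0 : M *m (delta_mx j 0 : 'cV_n.+1) = 0.
  apply: vnorm2_eq0; apply/eqP; rewrite eq_le vnorm2_ge0 andbT.
  exact: le_trans (opnorm2_bound _ _) (mulr_le0_ge0 Mle0 (vnorm2_ge0 _)).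
by move: Mcol0; rewrite -colE => /matrixP /(_ i 0); rewrite !mxE.
Qed.

Lemma hermitian_qform_diag n (H : 'M[C]_n) : ctrmx H = H ->
  exists d : 'rV[C]_n,
  [/\ forall j, eigenvalue H (d 0 j),
      forall a, eigenvalue H a -> exists j, a = d 0 j
    & forall v, exists2 w : 'cV[C]_n, sqnorm w = sqnorm v
        & qform H v = \sum_j d 0 j * (normc (w j 0) ^+ 2)%:C].
Proof.
move=> Hh; have Hn : H \is normalmx by rewrite qualifE -ctrmxE Hh.
set P := spectralmx H; set d := spectral_diag H.
have Pu : P \is unitarymx by apply: spectral_unitarymx.
have PPt : P *m ctrmx P = 1%:M by rewrite ctrmxE; apply/unitarymxP.
have PtP : ctrmx P *m P = 1%:M.
  by rewrite ctrmxE -invmx_unitary // mulVmx // unitarymx_unit.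
have HE : H = ctrmx P *m diag_mx d *m P.
  by rewrite ctrmxE -invmx_unitary //; apply/orthomx_spectralP.
exists d; split.
- move=> i; apply/eigenvalueP; exists (row i P).
    by rewrite -row_mul HE !mulmxA PPt mul1mx row_mul row_diag_mx -scalemxAl -rowE.
  apply/eqP => Pi0; move: (PPt) => /matrixP /(_ i i).
  rewrite !mxE eqxx big1 => [/eqP|j _]; first by rewrite eq_sym oner_eq0.
  by have /matrixP /(_ 0 j) := Pi0; rewrite !mxE => ->; rewrite mul0r.
- move=> a /eigenvalueP [x xH x0].
  have zD : x *m ctrmx P *m diag_mx d = a *: (x *m ctrmx P).
    by rewrite scalemxAl -xH HE -!mulmxA PPt mulmx1.
  have [j zj] : exists j, (x *m ctrmx P) 0 j != 0.
    apply/existsP; apply: contraR x0 => /existsPn z0.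
    rewrite -[x]mulmx1 -PtP mulmxA; apply/eqP/matrixP => i j.
    by rewrite ord1 mxE big1 ?mxE // => l _; move/negbNE/eqP: (z0 l) => ->;
      rewrite mul0r.
  exists j; move/matrixP: zD => /(_ 0 j); rewrite mul_mx_diag [LHS]mxE [RHS]mxE => zdj.
  by apply: (mulIf zj); rewrite -zdj mulrC.
- move=> v; exists (P *m v); first exact: sqnorm_unitary.
  rewrite /qform HE !mulmxA -ctrmx_mul -mulmxA mxE.
  apply: eq_bigr => j _; rewrite mul_mx_diag !mxE normc_sqr; ring.
Qed.

(* With a sign [s], this covers positive ([s = 1]) and negative ([s = -1])
   definiteness at once. *)
Definition signed_definite n (s : R) (H : 'M[C]_n) :=
  forall v : 'cV[C]_n, v != 0 -> 0 < s%:C * qform H v.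

Lemma posdef_signed_definite n (H : 'M[C]_n) : posdef H -> signed_definite 1 H.
Proof. by move=> Hpos v /Hpos; rewrite mul1r. Qed.

Lemma negdef_signed_definite n (H : 'M[C]_n) : negdef H -> signed_definite (-1) H.
Proof. by move=> Hneg v /Hneg; rewrite rmorphN rmorph1 mulN1r oppr_gt0. Qed.

Lemma signed_definite_eigenvalue n (s : R) (H : 'M[C]_n) a :
  s ^+ 2 = 1 -> signed_definite s H -> eigenvalue H a ->
  exists2 t : R, 0 < t & a = (s * t)%:C.
Proof.
move=> s2 Hdef /eigenvalueP [x xH x0].
have cx0 : ctrmx x != 0.
  by apply: contra x0 => /eqP cx; rewrite -(ctrmxK x) cx ctrmx0.
have xx_gt0 : 0 < (x *m ctrmx x) 0 0.
  rewrite -[x in x *m _]ctrmxK -sqnormE ltcR lt_def sqnorm_ge0 andbT.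
  by apply: contra cx0 => /eqP/sqnorm_eq0 ->.
have := Hdef _ cx0; rewrite /qform ctrmxK xH -scalemxAl mxE mulrA pmulr_lgt0 //.
move=> sa_gt0; exists (complex.Re (s%:C * a)).
  by move: sa_gt0; rewrite ltcE => /andP[].
have realcM (p q : R) : (p * q)%:C = p%:C * q%:C :> C by exact: rmorphM.
by rewrite realcM (RRe_real (gtr0_real sa_gt0)) mulrA -realcM -expr2 s2 mul1r.
Qed.

Lemma min_abs_eig_le n (H : 'M[C]_n) a : eigenvalue H a -> min_abs_eig H <= normc a.
Proof.
move=> Ha; apply: ge_inf; last by exists a.
by exists 0 => _ [b _ <-]; apply: normc_ge0.
Qed.

Lemma signed_definite_qform n (s : R) (H : 'M[C]_n.+1) :
  s ^+ 2 = 1 -> ctrmx H = H -> signed_definite s H ->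
  0 < min_abs_eig H /\
  forall v, exists2 t : R, min_abs_eig H * sqnorm v <= t & qform H v = (s * t)%:C.
Proof.
move=> s2 Hh Hdef; have [d [d_eig eig_d d_form]] := hermitian_qform_diag Hh.
have s_norm : `|s| = 1 by apply/eqP; rewrite -sqr_norm_eq1 s2.
pose t j := s * complex.Re (d 0 j).
have dE j : 0 < t j /\ d 0 j = (s * t j)%:C.
  rewrite /t; have [r r_gt0 ->] := signed_definite_eigenvalue s2 Hdef (d_eig j).
  by rewrite /= mulrA -expr2 s2 mul1r; split.
have normc_d j : normc (d 0 j) = t j.
  by have [tj_gt0 ->] := dE j; rewrite normc_real normrM s_norm mul1r gtr0_norm.
split.
  have [j0 _ t_min] := @arg_minP _ R _ ord0 xpredT t isT.
  apply: lt_le_trans (proj1 (dE j0)) _; apply: lb_le_inf.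
    by exists (normc (d 0 ord0)), (d 0 ord0) => //; apply: d_eig.
  by move=> _ [a /eig_d [j ->] <-]; rewrite normc_d t_min.
move=> v; have [w <- ->] := d_form v.
exists (\sum_j t j * normc (w j 0) ^+ 2).
  rewrite /sqnorm mulr_sumr; apply: ler_sum => j _.
  by rewrite -normc_d ler_wpM2r ?sqr_ge0 ?min_abs_eig_le.
rewrite mulr_sumr rmorph_sum; apply: eq_bigr => j _.
by rewrite (proj2 (dE j)) !rmorphM /= !mulrA.
Qed.

Lemma herm_part_hermitian n (P : 'M[C]_n) : ctrmx (herm_part P) = herm_part P.
Proof. by rewrite /herm_part ctrmxZ ctrmxD ctrmxK addrC conjc_inv conjc_nat. Qed.

Lemma qform_herm_part n (P : 'M[C]_n) (v : 'cV[C]_n) :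
  2 * qform (herm_part P) v = (ctrmx (P *m v) *m v) 0 0 + (ctrmx v *m (P *m v)) 0 0.
Proof.
rewrite /qform /herm_part -scalemxAr -scalemxAl mulmxDr mulmxDl ctrmx_mul !mulmxA.
rewrite [X in _ * X]mxE [X in _ * (_ * X)]mxE.
by rewrite mulrA mulfV ?mul1r // (pnatr_eq0 C 2).
Qed.

Lemma signed_definite_herm_part_neq0 n (P : 'M[C]_n.+1) (s : R) :
  signed_definite s (herm_part P) -> P != 0.
Proof.
move=> Pdef; apply/eqP => P0; pose e : 'cV[C]_n.+1 := delta_mx 0 0.
have e0 : e != 0.
  by apply/eqP => /matrixP /(_ 0 0); rewrite !mxE /= => /eqP; rewrite oner_eq0.
have := Pdef e e0.
by rewrite P0 /herm_part ctrmx0 addr0 scaler0 /qform mulmx0 mul0mx mxE mulr0 ltxx.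
Qed.

(* The step length [a = s m / N^2] minimizes the bound
   [1 - 2 a s m + a^2 N^2] on [|v - a P v|^2 / |v|^2]. *)
Lemma herm_part_contraction n (P : 'M[C]_n.+1) (s : R) :
  s ^+ 2 = 1 -> signed_definite s (herm_part P) ->
  let q := min_abs_eig (herm_part P) / opnorm2 P in
  0 < q /\
  forall v, vnorm2 (v - (s * min_abs_eig (herm_part P) / opnorm2 P ^+ 2)%:C *: (P *m v))
              <= Num.sqrt (1 - q ^+ 2) * vnorm2 v.
Proof.
move=> s2 Pdef q.
have [m_gt0 qform_ge] := signed_definite_qform s2 (herm_part_hermitian P) Pdef.
have N_gt0 := opnorm2_gt0 (signed_definite_herm_part_neq0 Pdef).
set m := min_abs_eig _ in m_gt0 qform_ge q *; set N := opnorm2 P in N_gt0 q *.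
split => [|v]; first by rewrite divr_gt0.
have [t t_ge qv] := qform_ge v; set a := s * m / N ^+ 2; set w := P *m v.
have expand b : sqnorm (v - b%:C *: w) = sqnorm v - 2 * (b * s) * t + b ^+ 2 * sqnorm w.
  apply: complexI; rewrite -scaleNr -rmorphN sqnormD_real_scale -qform_herm_part qv.
  rewrite !(rmorphB, rmorphD, rmorphM, rmorphN, rmorphXn) /=.
  ring.
have w_le : sqnorm w <= N ^+ 2 * sqnorm v.
  by rewrite -!vnorm2_sqr -exprMn !expr2 ler_pM ?vnorm2_ge0 ?opnorm2_bound.
pose k := m / N ^+ 2.
have k_ge0 : 0 <= k by rewrite divr_ge0 ?ltW ?exprn_gt0.
have as_k : a * s = k by rewrite /a /k -[RHS]mul1r -s2; field; rewrite gt_eqF.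
have a2_k : a ^+ 2 = k ^+ 2 by rewrite /a /k -[RHS]mul1r -s2; field; rewrite gt_eqF.
have km_q : k * m = q ^+ 2 by rewrite /k /q; field; rewrite gt_eqF.
have kN_q : k ^+ 2 * N ^+ 2 = q ^+ 2 by rewrite /k /q; field; rewrite gt_eqF.
apply: vnorm2_le_sqrt; rewrite expand as_k a2_k.
have kt_ge : k * (m * sqnorm v) <= k * t by rewrite ler_wpM2l.
have kw_le : k ^+ 2 * sqnorm w <= k ^+ 2 * (N ^+ 2 * sqnorm v).
  by rewrite ler_wpM2l ?sqr_ge0.
rewrite mulrA km_q in kt_ge; rewrite mulrA kN_q in kw_le; lra.
Qed.

End ComplexMatrices.

Lemma sqrt_1_sub_sqr_lt1 (R : rcfType) (q : R) : 0 < q -> Num.sqrt (1 - q ^+ 2) < 1.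
Proof.
move=> q_gt0; have [|q1] := lerP (1 - q ^+ 2) 0; first by move/ler0_sqrtr ->.
by rewrite -[X in _ < X]sqrtr1 ltr_sqrt // gtrBl exprn_gt0.
Qed.

Lemma scaled_krylov_sum (K : comNzRingType) n k (A : 'M[K]_n.+1) (c : 'I_k -> K)
    (b : K) (u : 'cV[K]_n.+1) :
  \sum_(j < k) (b * c j) *: (A ^+ j *m (A *m u))
  = b *: ((\sum_(j < k) c j *: A ^+ j.+1) *m u).
Proof.
rewrite mulmx_suml scaler_sumr; apply: eq_bigr => j _.
by rewrite mulmxA mulmxE -exprSr -scalemxAl scalerA.
Qed.

Theorem theorem1 (R : realType) (n k : nat) (A : 'M[R[i]]_n.+1)
  (y : 'cV[R[i]]_n.+1) (c : 'I_k -> R[i]) :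
  (0 < k)%N ->
  let PA := \sum_(j < k) c j *: A ^+ j.+1 in
  let H := herm_part PA in
  posdef H \/ negdef H ->
  let rho := Num.sqrt (1 - (min_abs_eig H / opnorm2 PA) ^+ 2) in
  rho < 1 /\
  (forall xn : 'cV[R[i]]_n.+1,
     exists a : 'I_k -> R[i],
       let xn1 := xn + \sum_(j < k) a j *: (A ^+ j *m (y - A *m xn)) in
       vnorm2 (y - A *m xn1) <= rho * vnorm2 (y - A *m xn)) /\
  (forall xs : 'cV[R[i]]_n.+1, A *m xs = y ->
   forall xn : 'cV[R[i]]_n.+1,
     exists a : 'I_k -> R[i],
       let xn1 := xn + \sum_(j < k) a j *: (A ^+ j *m (y - A *m xn)) in
       vnorm2 (xs - xn1) <= rho * vnorm2 (xs - xn)).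
Proof.
move=> _ PA H Hdef rho.
have [s s2 Hsdef] : exists2 s : R, s ^+ 2 = 1 & signed_definite s H.
  case: Hdef => [/posdef_signed_definite|/negdef_signed_definite] Hsdef;
    by [exists 1; rewrite ?expr1n | exists (-1); rewrite ?sqrrN ?expr1n].
have [q_gt0 contract] := herm_part_contraction s2 Hsdef.
set b := (s * _ / _)%:C in contract.
split; first exact: sqrt_1_sub_sqr_lt1.
split=> [xn | xs Axs xn]; exists (fun j => b * c j) => /=; set r := y - A *m xn.
- have -> : y - A *m (xn + \sum_(j < k) (b * c j) *: (A ^+ j *m r)) = r - b *: (PA *m r).
    rewrite mulmxDr opprD addrA mulmx_sumr -scaled_krylov_sum; congr (_ - _).
    by apply: eq_bigr => j _; rewrite scalemxAr !mulmxA mulmxE -exprS -exprSr scalemxAr.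
  exact: contract.
- have r_err : r = A *m (xs - xn) by rewrite mulmxBr Axs.
  rewrite r_err opprD addrA scaled_krylov_sum.
  exact: contract.
Qed.
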